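(* Assume $\lambda_A>0$ (the dataset need not be balanced). Then for every $\theta\in\mathbb R^d$, $$w(\theta)\le 2f_d(\theta)+\frac{\gamma^2}{N}\Big((\phi(s_{N+1})^T(\theta-\theta^* ))^2-(\phi(s_1)^T(\theta-\theta^* ))^2\Big)\le\Big(2+\frac{\gamma^2}{N\lambda_A}\Big)f_d(\theta).$$
   Context: Finite-sample setting. Let $\mathcal S$ be a finite state space, $\phi:\mathcal S\to\mathbb R^d$ a feature map with $\|\phi(s)\|_2\le 1$ for all $s$, $r:\mathcal S\times\mathcal S\to\mathbb R$ a reward function and $\gamma\in[0,1)$. For a pair of states $(s,s')$ and $\theta\in\mathbb R^d$ let $g_{s,s'}(\theta)=(r(s,s')+\gamma\phi(s')^T\theta-\phi(s)^T\theta)\phi(s)$. A dataset is a state trajectory $s_1,\dots,s_{N+1}$, giving the $N$ pairs $(s_t,s_{t+1})$, $t=1,\dots,N$. Let $A_d=\frac1N\sum_{t=1}^N\phi(s_t)(\phi(s_t)-\gamma\phi(s_{t+1}))^T$ and $b_d=\frac1N\sum_{t=1}^N r(s_t,s_{t+1})\phi(s_t)$. Assume $A_d$ is nonsingular and let $\theta^*=A_d^{-1}b_d$. Let $\lambda_A$ denote the minimum eigenvalue of $(A_d+A_d^T)/2$. Define $f_d(\theta)=(\theta-\theta^* )^TA_d(\theta-\theta^* )$ and $w(\theta)=\frac1N\sum_{t=1}^N\|g_{s_t,s_{t+1}}(\theta)-g_{s_t,s_{t+1}}(\theta^* )\|^2$. *)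

From HB Require Import structures.
From mathcomp Require Import all_boot all_order all_algebra.
Set Implicit Arguments. Unset Strict Implicit. Unset Printing Implicit Defensive.
Import Order.TTheory GRing.Theory Num.Theory.
Local Open Scope ring_scope.

Section TD.
Variables (R : rcfType) (S : finType) (d : nat).

Definition dotv (u v : 'cV[R]_d) : R := (u^T *m v) ord0 ord0.
Definition sqnorm (u : 'cV[R]_d) : R := dotv u u.

Definition gTD (phi : S -> 'cV[R]_d) (r : S -> S -> R) (gamma : R)
  (s s' : S) (theta : 'cV[R]_d) : 'cV[R]_d :=
  (r s s' + gamma * dotv (phi s') theta - dotv (phi s) theta) *: phi s.

(* The trajectory is traj 1, ..., traj (N+1); pairs (traj t, traj (t+1)), t = 1..N. *)
Definition A_d (phi : S -> 'cV[R]_d) (gamma : R) (N : nat) (traj : nat -> S)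
  : 'M[R]_d :=
  (N%:R)^-1 *: \sum_(1 <= t < N.+1)
      (phi (traj t) *m (phi (traj t) - gamma *: phi (traj t.+1))^T).

Definition b_d (phi : S -> 'cV[R]_d) (r : S -> S -> R) (N : nat) (traj : nat -> S)
  : 'cV[R]_d :=
  (N%:R)^-1 *: \sum_(1 <= t < N.+1) (r (traj t) (traj t.+1) *: phi (traj t)).

Definition theta_star (phi : S -> 'cV[R]_d) (r : S -> S -> R) (gamma : R)
  (N : nat) (traj : nat -> S) : 'cV[R]_d :=
  invmx (A_d phi gamma N traj) *m b_d phi r N traj.

Definition f_d (phi : S -> 'cV[R]_d) (r : S -> S -> R) (gamma : R)
  (N : nat) (traj : nat -> S) (theta : 'cV[R]_d) : R :=
  let e := theta - theta_star phi r gamma N traj in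
  (e^T *m A_d phi gamma N traj *m e) ord0 ord0.

Definition w_d (phi : S -> 'cV[R]_d) (r : S -> S -> R) (gamma : R)
  (N : nat) (traj : nat -> S) (theta : 'cV[R]_d) : R :=
  (N%:R)^-1 * \sum_(1 <= t < N.+1)
     sqnorm (gTD phi r gamma (traj t) (traj t.+1) theta
             - gTD phi r gamma (traj t) (traj t.+1) (theta_star phi r gamma N traj)).

End TD.

Definition is_min_eigenvalue (R : rcfType) (n : nat) (M : 'M[R]_n) (lam : R) : Prop :=
  eigenvalue M lam /\ (forall b : R, eigenvalue M b -> lam <= b).

(* Write e := theta - theta* and a_t := phi(s_t)^T e.  Then
   g_t(theta) - g_t(theta* ) = (gamma a_(t+1) - a_t) phi(s_t), so
   N w <= sum_t (gamma a_(t+1) - a_t)^2, while N f_d = sum_t a_t (a_t - gamma a_(t+1)).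
   Expanding the square and shifting the index in sum_t a_(t+1)^2 yields the
   first inequality, with slack (1 - gamma^2) sum_t a_t^2 / N.  For the second,
   f_d is the quadratic form of the symmetric part of A_d, so
   f_d >= lambda_A |e|^2 >= lambda_A a_(N+1)^2 by Cauchy-Schwarz and |phi| <= 1. *)

From HB Require Import structures.
From mathcomp Require Import all_boot all_order all_algebra.
From mathcomp Require Import complex.
From mathcomp Require Import ring lra.
Set Implicit Arguments.
Unset Strict Implicit.
Unset Printing Implicit Defensive.
Import Order.TTheory GRing.Theory Num.Theory.
Local Open Scope ring_scope.
Local Open Scope sesquilinear_scope.

Lemma spectral_diag_eigenvalue (C : numClosedFieldType) n (A : 'M[C]_n) :
  A \is normalmx -> forall j, eigenvalue A (spectral_diag A 0 j).
Proof.
move=> /orthomx_spectralP A_eq j; set P := spectralmx A in A_eq.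
have PA : P *m A = diag_mx (spectral_diag A) *m P.
  by rewrite {1}A_eq !mulmxA mulmxV ?spectral_unit // mul1mx.
apply/eigenvalueP; exists (row j P).
  by rewrite -row_mul PA row_mul row_diag_mx -scalemxAl -rowE.
apply/eqP => Pj0; have := unitarymxP (spectral_unitarymx A).
move/(congr1 (row j)); rewrite row_mul -/P Pj0 mul0mx => /matrixP/(_ 0 j).
by rewrite !mxE eqxx /= => /eqP; rewrite eq_sym oner_eq0.
Qed.

Section SymmetricQuadForm.
Variable R : rcfType.
Local Notation toC := (real_complex R).

(* The spectral theorem is available for hermitian matrices over [R[i]]:
   diagonalize the complexification of [M] by a unitary matrix; its diagonal
   entries are real eigenvalues, hence eigenvalues of [M] itself. *)
Lemma min_eigenvalue_quad_form_le n (M : 'M[R]_n) (lam : R) :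
  M^T = M -> (forall b, eigenvalue M b -> lam <= b) ->
  forall x : 'cV[R]_n, lam * (x^T *m x) 0 0 <= (x^T *m M *m x) 0 0.
Proof.
move=> Msym lam_min x; pose Mc := map_mx toC M.
have Mc_herm : Mc \is hermsymmx.
  apply/is_hermitianmxP; rewrite expr0 scale1r; apply/matrixP=> i j.
  by rewrite !mxE -[in LHS]Msym mxE; apply/esym/conjc_real.
have /orthomx_spectralP Mc_eq := hermitian_normalmx Mc_herm.
set P := spectralmx Mc in Mc_eq; set D := spectral_diag Mc in Mc_eq.
have P_unitary : P \is unitarymx := spectral_unitarymx Mc.
have lam_le_D j : toC lam <= D 0 j.
  have Dj_real : D 0 j \is Num.real.
    exact: mxOverP (hermitian_spectral_diag_real Mc_herm) 0 j.
  have DjE : toC (complex.Re (D 0 j)) = D 0 j by rewrite complexRe; apply: Creal_ReP.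
  rewrite -DjE lecR; apply: lam_min.
  have := spectral_diag_eigenvalue (hermitian_normalmx Mc_herm) j.
  by rewrite -/D -DjE eigenvalue_map.
have PPt : P *m P ^t* = 1%:M by apply/unitarymxP.
have PtP : P ^t* *m P = 1%:M by rewrite -invmx_unitary // mulVmx ?unitarymx_unit.
pose v := map_mx toC x^T *m P ^t*.
have toC_quad (A : 'M[R]_n) : toC ((x^T *m A *m x) 0 0)
    = (v *m (P *m map_mx toC A *m P ^t*) *m v ^t*) 0 0.
  have -> : v ^t* = P *m map_mx toC x.
    rewrite /v trmx_mul map_mxM trmxCK; congr (_ *m _).
    by apply/matrixP => i j; rewrite !mxE; apply: conjc_real.
  rewrite /v !mulmxA -(mulmxA _ (P ^t*) P) PtP mulmx1.
  by rewrite -(mulmxA _ (P ^t*) P) PtP mulmx1 -!map_mxM !mxE.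
have P_Mc : P *m Mc *m P ^t* = diag_mx D.
  by rewrite Mc_eq invmx_unitary // !mulmxA PPt mul1mx -mulmxA PPt mulmx1.
rewrite -{1}(mulmx1 x^T) -lecR rmorphM /= !toC_quad P_Mc map_mx1 mulmx1 PPt mulmx1 mul_mx_diag.
rewrite !mxE mulr_sumr; apply: ler_sum => j _; rewrite !mxE.
by rewrite mulrAC mulrC ler_wpM2l ?mul_conjC_ge0.
Qed.
End SymmetricQuadForm.

Section DotProduct.
Variables (R : rcfType) (d : nat).
Implicit Types (u v w : 'cV[R]_d).

Lemma dotvE u v : dotv u v = \sum_i u i 0 * v i 0.
Proof. by rewrite /dotv mxE; apply: eq_bigr => i _; rewrite mxE. Qed.

Lemma dotvC u v : dotv u v = dotv v u.
Proof. by rewrite !dotvE; apply: eq_bigr => i _; rewrite mulrC. Qed.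

Lemma dotvBr u v w : dotv u (v - w) = dotv u v - dotv u w.
Proof. by rewrite !dotvE -sumrB; apply: eq_bigr => i _; rewrite !mxE mulrBr. Qed.

Lemma dotvBl u v w : dotv (v - w) u = dotv v u - dotv w u.
Proof. by rewrite ![dotv _ u]dotvC dotvBr. Qed.

Lemma dotvZl c u v : dotv (c *: u) v = c * dotv u v.
Proof. by rewrite !dotvE mulr_sumr; apply: eq_bigr => i _; rewrite !mxE mulrA. Qed.

Lemma dotvZr c u v : dotv u (c *: v) = c * dotv u v.
Proof. by rewrite dotvC dotvZl dotvC. Qed.

Lemma sqnormZ c u : sqnorm (c *: u) = c ^+ 2 * sqnorm u.
Proof. by rewrite /sqnorm dotvZl dotvZr mulrA expr2. Qed.

Lemma sqnorm_ge0 u : 0 <= sqnorm u.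
Proof. by rewrite /sqnorm dotvE; apply: sumr_ge0 => i _; rewrite -expr2 sqr_ge0. Qed.

(* Expand [0 <= |v - <u,v> u|^2]. *)
Lemma dotv_sqr_le u v : sqnorm u <= 1 -> dotv u v ^+ 2 <= sqnorm v.
Proof.
move=> u_le1; set a := dotv u v.
have : 0 <= sqnorm (v - a *: u) := sqnorm_ge0 _.
have -> : sqnorm (v - a *: u) = sqnorm v - 2%:R * a ^+ 2 + a ^+ 2 * sqnorm u.
  by rewrite /sqnorm dotvBl !dotvBr !dotvZl !dotvZr [dotv v u]dotvC /a; ring.
have : a ^+ 2 * sqnorm u <= a ^+ 2 by rewrite ler_piMr ?sqr_ge0.
have := sqr_ge0 a; lra.
Qed.

Lemma quad_form_outer (e p q : 'cV[R]_d) :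
  (e^T *m (p *m q^T) *m e) 0 0 = dotv p e * dotv q e.
Proof.
rewrite !mulmxA -(mulmxA _ q^T) mxE big_ord1 /dotv; congr (_ * _).
by rewrite -[e^T *m p]trmxK trmx_mul trmxK mxE.
Qed.

End DotProduct.

Section SymmetricPart.
Variables (F : fieldType) (n : nat) (A : 'M[F]_n).
Hypothesis two_neq0 : 2%:R != 0 :> F.

Lemma tr_symmetric_part : ((2%:R)^-1 *: (A + A^T))^T = (2%:R)^-1 *: (A + A^T).
Proof. by rewrite linearZ /= linearD /= trmxK addrC. Qed.

Lemma quad_form_symmetric_part (v : 'cV[F]_n) :
  (v^T *m ((2%:R)^-1 *: (A + A^T)) *m v) 0 0 = (v^T *m A *m v) 0 0.
Proof.
have vAtv : v^T *m A^T *m v = v^T *m A *m v.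
  transitivity ((v^T *m A *m v)^T); first by rewrite !trmx_mul trmxK mulmxA.
  by apply/matrixP => i j; rewrite !ord1 mxE.
rewrite -scalemxAr -scalemxAl mulmxDr mulmxDl vAtv -mulr2n -scalerMnr.
by rewrite scalerMnl -(mulr_natr _ 2) mulVf // scale1r.
Qed.

End SymmetricPart.

Lemma sumr_nat_succ {V : zmodType} (F : nat -> V) m n : (m <= n)%N ->
  \sum_(m <= t < n) F t.+1 = \sum_(m <= t < n) F t + F n - F m.
Proof.
by move=> le_mn; rewrite -big_nat_recr //= big_nat_recl //= [F m + _]addrC addrK.
Qed.

Lemma sum_td_error_sqr_le (R : realFieldType) (a : nat -> R) (gamma : R) N :
  gamma ^+ 2 <= 1 ->
  \sum_(1 <= t < N.+1) (gamma * a t.+1 - a t) ^+ 2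
    <= 2%:R * \sum_(1 <= t < N.+1) a t * (a t - gamma * a t.+1)
       + gamma ^+ 2 * (a N.+1 ^+ 2 - a 1%N ^+ 2).
Proof.
move=> gamma2_le1.
set S0 := \sum_(1 <= t < N.+1) a t ^+ 2.
set X := \sum_(1 <= t < N.+1) a t * a t.+1.
have S1E : \sum_(1 <= t < N.+1) a t.+1 ^+ 2 = S0 + a N.+1 ^+ 2 - a 1%N ^+ 2.
  exact: (sumr_nat_succ (fun t => a t ^+ 2) (ltn0Sn N)).
have -> : \sum_(1 <= t < N.+1) (gamma * a t.+1 - a t) ^+ 2
    = gamma ^+ 2 * \sum_(1 <= t < N.+1) a t.+1 ^+ 2 - 2%:R * gamma * X + S0.
  rewrite !mulr_sumr -sumrB -big_split /=.
  by apply: eq_bigr => t _; ring.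
have -> : \sum_(1 <= t < N.+1) a t * (a t - gamma * a t.+1) = S0 - gamma * X.
  by rewrite /S0 /X mulr_sumr -sumrB; apply: eq_bigr => t _; ring.
have : 0 <= (1 - gamma ^+ 2) * S0.
  by rewrite mulr_ge0 ?subr_ge0 // sumr_ge0 // => t _; exact: sqr_ge0.
rewrite S1E; lra.
Qed.


Section TemporalDifference.
Variables (R : rcfType) (S : finType) (d : nat).
Variables (phi : S -> 'cV[R]_d) (r : S -> S -> R) (gamma : R).

Lemma gTD_subr s s' theta theta' :
  gTD phi r gamma s s' theta - gTD phi r gamma s s' theta'
  = (gamma * dotv (phi s') (theta - theta') - dotv (phi s) (theta - theta')) *: phi s.
Proof. by rewrite /gTD -scalerBl !dotvBr; congr (_ *: _); ring. Qed.

Variables (N : nat) (traj : nat -> S).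
Local Notation A := (A_d phi gamma N traj).
Local Notation err theta := (theta - theta_star phi r gamma N traj).
Let a theta t := dotv (phi (traj t)) (err theta).

Lemma f_d_sum theta : f_d phi r gamma N traj theta
  = N%:R^-1 * \sum_(1 <= t < N.+1) a theta t * (a theta t - gamma * a theta t.+1).
Proof.
rewrite /f_d /A_d -scalemxAr -scalemxAl mxE mulmx_sumr mulmx_suml summxE.
by congr (_ * _); apply: eq_bigr => t _; rewrite quad_form_outer dotvBl dotvZl.
Qed.

Lemma w_d_le_sum theta : (forall s, sqnorm (phi s) <= 1) ->
  w_d phi r gamma N traj theta
    <= N%:R^-1 * \sum_(1 <= t < N.+1) (gamma * a theta t.+1 - a theta t) ^+ 2.
Proof.
move=> phi_le1; rewrite /w_d ler_wpM2l ?invr_ge0 ?ler0n //.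
by apply: ler_sum => t _; rewrite gTD_subr sqnormZ ler_piMr ?sqr_ge0.
Qed.

Lemma w_d_le_mid theta : (forall s, sqnorm (phi s) <= 1) -> gamma ^+ 2 <= 1 ->
  w_d phi r gamma N traj theta
    <= 2%:R * f_d phi r gamma N traj theta
       + gamma ^+ 2 / N%:R * (a theta N.+1 ^+ 2 - a theta 1%N ^+ 2).
Proof.
move=> phi_le1 gamma2_le1; apply: le_trans (w_d_le_sum theta phi_le1) _.
rewrite f_d_sum mulrCA mulrAC [_ * N%:R^-1]mulrC -mulrDr.
by rewrite ler_wpM2l ?invr_ge0 ?ler0n ?sum_td_error_sqr_le.
Qed.

Lemma f_d_ge_min_eigenvalue lam theta :
  is_min_eigenvalue ((2%:R)^-1 *: (A + A^T)) lam ->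
  lam * sqnorm (err theta) <= f_d phi r gamma N traj theta.
Proof.
move=> [_ lam_min].
have := min_eigenvalue_quad_form_le (tr_symmetric_part A) lam_min (err theta).
by rewrite quad_form_symmetric_part ?pnatr_eq0.
Qed.

End TemporalDifference.

Theorem mainTheorem6 (R : rcfType) (S : finType) (d : nat)
  (phi : S -> 'cV[R]_d) (r : S -> S -> R) (gamma : R) (N : nat)
  (traj : nat -> S) (lamA : R) :
  (forall s : S, sqnorm (phi s) <= 1) ->
  0 <= gamma -> gamma < 1 ->
  (0 < N)%N ->
  A_d phi gamma N traj \in unitmx ->
  is_min_eigenvalue ((2%:R)^-1 *: (A_d phi gamma N traj + (A_d phi gamma N traj)^T)) lamA ->
  0 < lamA ->
  forall theta : 'cV[R]_d,
    let e := theta - theta_star phi r gamma N traj in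
    let mid := 2%:R * f_d phi r gamma N traj theta
               + gamma ^+ 2 / N%:R
                 * (dotv (phi (traj N.+1)) e ^+ 2 - dotv (phi (traj 1%N)) e ^+ 2) in
    w_d phi r gamma N traj theta <= mid /\
    mid <= (2%:R + gamma ^+ 2 / (N%:R * lamA)) * f_d phi r gamma N traj theta.
Proof.
move=> phi_le1 gamma_ge0 gamma_lt1 _ _ lam_min lam_gt0 theta e mid.
have gamma2_le1 : gamma ^+ 2 <= 1 by rewrite expr_le1 // ltW.
split; first exact: w_d_le_mid.
set f := f_d phi r gamma N traj theta in mid *.
have last_le : dotv (phi (traj N.+1)) e ^+ 2 <= f / lamA.
  rewrite ler_pdivlMr // mulrC; apply: le_trans (f_d_ge_min_eigenvalue r theta lam_min).
  by apply: ler_wpM2l; [exact: ltW | exact: dotv_sqr_le].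
rewrite /mid [X in _ <= X]mulrDl lerD2l invfM mulrA.
have -> : gamma ^+ 2 / N%:R / lamA * f = gamma ^+ 2 / N%:R * (f / lamA) by ring.
rewrite ler_wpM2l ?divr_ge0 ?sqr_ge0 ?ler0n // lerBlDr.
by rewrite (le_trans last_le) // lerDl sqr_ge0.
Qed.
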